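(* If $\mu\preceq\mu'$ and $v$ is a move on an interval $[a,b]$ that can be applied to $\mu$, then $v\mu\preceq\bar v\mu'$, where $\bar v$ is the extreme move on $[a,b]$.
   Context: A distribution is a finite set $\{(x_1,m_1),\dots,(x_k,m_k)\}$, $m_i>0$; $\mu(A)=\sum_{x_i\in A}m_i$; $M_j[\mu]=\sum_im_ix_i^j$. A move $v=([a,b],\delta)$ has $\delta$ a signed distribution on $[a,b]$ with $M_0[\delta]=M_1[\delta]=0$; it applies to $\mu$ if $\mu+\delta$ is a distribution, and $v\mu=\mu+\delta$. The extreme move $\bar v$ on $[a,b]$ maps any distribution $\mu$ to the distribution $\mu'$ with $\mu'\{a<x<b\}=0$, $\mu'(\{x\})=\mu(\{x\})$ for $x\notin[a,b]$, and $M_0[\mu']=M_0[\mu]$, $M_1[\mu']=M_1[\mu]$. $\mu'$ is a basic split of $\mu$ if obtained by replacing one point mass $(x_i,m_i)$ by finitely many point masses of total mass $m_i$ and center of mass $x_i$; $\mu\preceq\mu'$ if $\mu'$ is obtained from $\mu$ by zero or more basic splits. *)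

(* Positions and masses live in an arbitrary real field R
   (the paper uses the real numbers; every notion here is order-algebraic). *)
From HB Require Import structures.
From mathcomp Require Import all_boot all_order all_algebra.
From Stdlib Require Import Relations.
Set Implicit Arguments. Unset Strict Implicit. Unset Printing Implicit Defensive.
Import Order.TTheory GRing.Theory Num.Theory.
Local Open Scope ring_scope.

Section Dist.
Variable R : realFieldType.

(* A (signed) point-mass list: pairs (position, mass). *)
Definition pmlist := seq (R * R).

Definition mass_at (s : pmlist) (y : R) : R := \sum_(p <- s | p.1 == y) p.2.

Definition moment (j : nat) (s : pmlist) : R := \sum_(p <- s) p.2 * p.1 ^+ j.

Definition is_dist (s : pmlist) : Prop :=
  uniq (map fst s) /\ (forall p, p \in s -> 0 < p.2).

Definition is_signed_dist_on (a b : R) (d : pmlist) : Prop :=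
  uniq (map fst d) /\ (forall p, p \in d -> p.2 != 0 /\ a <= p.1 <= b).

Definition is_move (a b : R) (d : pmlist) : Prop :=
  is_signed_dist_on a b d /\ moment 0 d = 0 /\ moment 1 d = 0.

Definition move_result (d mu nu : pmlist) : Prop :=
  is_dist nu /\ forall y, mass_at nu y = mass_at mu y + mass_at d y.

Definition extreme_result (a b : R) (mu nu : pmlist) : Prop :=
  is_dist nu /\
  (forall y, a < y < b -> mass_at nu y = 0) /\
  (forall y, ~ (a <= y <= b) -> mass_at nu y = mass_at mu y) /\
  moment 0 nu = moment 0 mu /\ moment 1 nu = moment 1 mu.

(* Basic split: replace the point mass s`_i = (x_i,m_i) by finitely many point
   masses t (positive masses) of total mass m_i and centre of mass x_i; the
   result (coinciding positions merged) is the distribution s'. *)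
Definition basic_split (s s' : pmlist) : Prop :=
  is_dist s /\ is_dist s' /\
  exists (i : nat) (t : pmlist), (i < size s)%N /\
    (forall p, p \in t -> 0 < p.2) /\
    moment 0 t = (nth (0, 0) s i).2 /\
    moment 1 t = (nth (0, 0) s i).2 * (nth (0, 0) s i).1 /\
    forall y, mass_at s' y = mass_at (take i s ++ drop i.+1 s ++ t) y.

Definition split_le (s s' : pmlist) : Prop :=
  clos_refl_trans pmlist basic_split s s'.

End Dist.

From HB Require Import structures.
From mathcomp Require Import all_boot all_order all_algebra.
From mathcomp Require Import ring.
From Stdlib Require Import Relations.
Set Implicit Arguments. Unset Strict Implicit. Unset Printing Implicit Defensive.
Import Order.TTheory GRing.Theory Num.Theory.
Local Open Scope ring_scope.

(* For a < b the extreme move is computed by [extreme], which replaces an atom at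
   x in (a, b) by atoms at a and b with the same mass and barycentre;
   [extreme_unique] shows that this is the extreme move, because the masses off
   {a, b} together with the first two moments determine a measure. Then
   - s <= extreme s ([le_extreme]): split every atom into its extreme image;
   - extreme is monotone ([extreme_mono]): when an inner atom at x is split into
     t, the mass that x contributed to a and b is split back into extreme t,
     which decomposes into a part of barycentre a and one of barycentre b
     ([barycentric_split], with weights from the 2x2 system of [mixing_weights]).
   As v mu and mu have the same extreme image, the theorem follows from
   v mu <= extreme (v mu) = extreme mu <= extreme mu' = vbar mu'.
   For a = b both the move and the extreme move are trivial. *)

Section PointMasses.
Variable R : realFieldType.
Implicit Types (s t u : pmlist R) (p : R * R) (x y m : R).

Definition same_mass s t := forall y, mass_at s y = mass_at t y.

Definition nonneg_atoms s : bool := all (fun p => 0 <= p.2) s.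

Definition nonneg_measure s := forall y, 0 <= mass_at s y.

Lemma mass_nil y : mass_at ([::] : pmlist R) y = 0.
Proof. by rewrite /mass_at big_nil. Qed.

Lemma mass_cons p s y :
  mass_at (p :: s) y = (if p.1 == y then p.2 else 0) + mass_at s y.
Proof. by rewrite /mass_at big_cons; case: ifP; rewrite ?add0r. Qed.

Lemma mass_cat s t y : mass_at (s ++ t) y = mass_at s y + mass_at t y.
Proof. by rewrite /mass_at big_cat. Qed.

Lemma mass_seq1 p y : mass_at [:: p] y = if p.1 == y then p.2 else 0.
Proof. by rewrite mass_cons mass_nil addr0. Qed.

Lemma moment_nil j : moment j ([::] : pmlist R) = 0.
Proof. by rewrite /moment big_nil. Qed.

Lemma moment_cons j p s : moment j (p :: s) = p.2 * p.1 ^+ j + moment j s.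
Proof. by rewrite /moment big_cons. Qed.

Lemma moment_cat j s t : moment j (s ++ t) = moment j s + moment j t.
Proof. by rewrite /moment big_cat. Qed.

Lemma nonneg_atoms_cons p s : nonneg_atoms (p :: s) = (0 <= p.2) && nonneg_atoms s.
Proof. by []. Qed.

Lemma nonneg_atoms_cat s t :
  nonneg_atoms (s ++ t) = nonneg_atoms s && nonneg_atoms t.
Proof. exact: all_cat. Qed.

Lemma same_mass_sym s t : same_mass s t -> same_mass t s.
Proof. by move=> E y. Qed.

Lemma same_mass_perm s t : perm_eq s t -> same_mass s t.
Proof. by move=> E y; rewrite /mass_at (perm_big _ E). Qed.

Lemma mass_at_absent s y : y \notin map fst s -> mass_at s y = 0.
Proof.
move=> ys; rewrite /mass_at big1_seq // => p /andP [/eqP py ps].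
by move: ys; rewrite -py map_f.
Qed.

Lemma mass_at_ge0 s y : nonneg_atoms s -> 0 <= mass_at s y.
Proof. by move=> /allP s0; rewrite /mass_at big_seq_cond; apply: sumr_ge0 => p /andP [/s0]. Qed.

Lemma moment_as_sum j s (X : seq R) : uniq X -> {subset map fst s <= X} ->
  moment j s = \sum_(y <- X) mass_at s y * y ^+ j.
Proof.
move=> uX; elim: s => [|p s IH] sX.
  by rewrite moment_nil big1 // => y _; rewrite mass_nil mul0r.
rewrite moment_cons IH => [|y ys]; last by apply: sX; rewrite inE ys orbT.
under [RHS]eq_bigr => y _ do rewrite mass_cons mulrDl.
rewrite big_split /=; congr (_ + _).
rewrite (bigD1_seq p.1) ?sX ?mem_head //= eqxx big1 ?addr0 // => y yp.
by rewrite eq_sym (negbTE yp) mul0r.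
Qed.

Lemma moment_same_mass j s t : same_mass s t -> moment j s = moment j t.
Proof.
move=> E; pose X := undup (map fst (s ++ t)).
have uX : uniq X := undup_uniq _.
have sX : {subset map fst s <= X} by move=> y ys; rewrite mem_undup map_cat mem_cat ys.
have tX : {subset map fst t <= X}.
  by move=> y yt; rewrite mem_undup map_cat mem_cat yt orbT.
by rewrite (moment_as_sum j uX sX) (moment_as_sum j uX tX); apply: eq_bigr => y _; rewrite E.
Qed.

Lemma moment_diff_on j s t (Z : seq R) : uniq Z ->
  (forall y, y \notin Z -> mass_at s y = mass_at t y) ->
  moment j s - moment j t = \sum_(z <- Z) (mass_at s z - mass_at t z) * z ^+ j.
Proof.
move=> uZ E; pose X := undup (map fst (s ++ t) ++ Z).
have uX : uniq X := undup_uniq _.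
have sX : {subset map fst s <= X} by move=> y ys; rewrite mem_undup !mem_cat map_cat mem_cat ys.
have tX : {subset map fst t <= X}.
  by move=> y yt; rewrite mem_undup !mem_cat map_cat mem_cat yt orbT.
rewrite (moment_as_sum j uX sX) (moment_as_sum j uX tX).
rewrite -sumrB; under eq_bigr => y _ do rewrite -mulrBl.
rewrite (bigID (fun y => y \in Z)) /= [X in _ + X]big1 ?addr0; last first.
  by move=> y yZ; rewrite E // subrr mul0r.
rewrite -big_filter; apply: perm_big; apply: uniq_perm => //.
  by rewrite filter_uniq ?undup_uniq.
by move=> y; rewrite mem_filter mem_undup mem_cat; case: (y \in Z); rewrite ?orbT ?andbF.
Qed.

Lemma moment0_ge0 s : nonneg_atoms s -> 0 <= moment 0 s.
Proof.
by move=> /allP s0; rewrite /moment big_seq; apply: sumr_ge0 => p /s0 p0; rewrite expr0 mulr1.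
Qed.

Lemma null_of_moment0 s : nonneg_atoms s -> moment 0 s = 0 -> same_mass s [::].
Proof.
elim: s => [|p s IH] //= /andP [p0 s0].
rewrite moment_cons expr0 mulr1 => /eqP; rewrite paddr_eq0 ?moment0_ge0 //.
by case/andP=> /eqP P0 /eqP/(IH s0) E y; rewrite mass_cons E P0 if_same add0r.
Qed.

Lemma moment1_le c s : nonneg_atoms s -> all (fun p => p.1 <= c) s ->
  moment 1 s <= c * moment 0 s.
Proof.
elim: s => [|p s IH] /=; first by rewrite !moment_nil mulr0.
case/andP=> p0 s0 /andP [pc sc]; rewrite !moment_cons expr0 expr1 mulr1 mulrDr.
by rewrite lerD ?IH // [c * _]mulrC ler_wpM2l.
Qed.

Lemma moment1_ge c s : nonneg_atoms s -> all (fun p => c <= p.1) s ->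
  c * moment 0 s <= moment 1 s.
Proof.
elim: s => [|p s IH] /=; first by rewrite !moment_nil mulr0.
case/andP=> p0 s0 /andP [pc sc]; rewrite !moment_cons expr0 expr1 mulr1 mulrDr.
by rewrite lerD ?IH // [c * _]mulrC ler_wpM2l.
Qed.

Lemma nonneg_atoms_filter (P : pred (R * R)) s :
  nonneg_atoms s -> nonneg_atoms (filter P s).
Proof. by move=> /allP s0; apply/allP => q; rewrite mem_filter => /andP [_ /s0]. Qed.

Definition scale k s : pmlist R := [seq (p.1, k * p.2) | p <- s].

Lemma scale_mass k s y : mass_at (scale k s) y = k * mass_at s y.
Proof.
elim: s => [|p s IH]; first by rewrite !mass_nil mulr0.
by rewrite /= !mass_cons IH mulrDr /=; case: ifP; rewrite ?mulr0.
Qed.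

Lemma scale_moment j k s : moment j (scale k s) = k * moment j s.
Proof.
elim: s => [|p s IH]; first by rewrite !moment_nil mulr0.
by rewrite /= !moment_cons IH mulrDr mulrA.
Qed.

Lemma scale_nonneg k s : 0 <= k -> nonneg_atoms s -> nonneg_atoms (scale k s).
Proof. by move=> k0 /allP s0; apply/allP => _ /mapP [p /s0 p0 ->]; apply: mulr_ge0. Qed.

Lemma dist_nonneg s : is_dist s -> nonneg_atoms s.
Proof. by case=> _ s0; apply/allP => p /s0/ltW. Qed.

Lemma dist_mass_at s p : is_dist s -> p \in s -> mass_at s p.1 = p.2.
Proof.
case=> + _; elim: s => [|q s IH] //= /andP [qs us].
rewrite inE mass_cons => /orP [/eqP ->|ps].
  by rewrite eqxx mass_at_absent ?addr0.
have -> : (q.1 == p.1) = false.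
  by apply: contraNF qs => /eqP ->; apply: map_f.
by rewrite add0r IH.
Qed.

Lemma mass_at_graph (f : R -> R) (Y : seq R) z : uniq Y ->
  mass_at [seq (y, f y) | y <- Y] z = if z \in Y then f z else 0.
Proof.
elim: Y => [|y Y IH] /= ; first by rewrite mass_nil.
case/andP=> yY uY; rewrite mass_cons IH // inE.
have [<-|yz] /= := eqVneq y z; last by rewrite add0r.
by rewrite (negbTE yY) addr0.
Qed.

Definition normalize s : pmlist R :=
  [seq (y, mass_at s y) | y <- undup (map fst s) & mass_at s y != 0].

Lemma normalize_same_mass s : same_mass (normalize s) s.
Proof.
move=> z; rewrite mass_at_graph ?filter_uniq ?undup_uniq // mem_filter mem_undup.
case: ifP => // /negbT; rewrite negb_and negbK => /orP [/eqP -> //|zs].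
by rewrite mass_at_absent.
Qed.

Lemma normalize_dist s : nonneg_measure s -> is_dist (normalize s).
Proof.
move=> s0; split; first by rewrite -map_comp map_id filter_uniq ?undup_uniq.
by move=> _ /mapP [y + ->] /=; rewrite mem_filter lt_def => /andP [-> _]; apply: s0.
Qed.

(* Distributions representing the same measure are related by one basic split
   (the first atom "split" into itself). *)
Lemma split_le_same_mass u u' : is_dist u -> is_dist u' -> same_mass u u' ->
  split_le u u'.
Proof.
case: u => [|p u] du du' E.
  case: u' du' E => [|q u'] du' E; first exact: rt_refl.
  have := dist_mass_at du' (mem_head q u'); rewrite -E mass_nil => q0.
  by case: du' => _ /(_ q (mem_head _ _)); rewrite -q0 ltxx.
apply: rt_step; do 2 split=> //; exists 0%N, [:: p]; split=> //; split.
  by move=> q; rewrite inE => /eqP ->; case: du => _; apply; rewrite mem_head.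
rewrite /moment !big_seq1 expr0 mulr1 expr1; do 2 split=> //.
move=> y; rewrite -E /= drop0 mass_cons mass_cat mass_seq1.
by rewrite addrC.
Qed.

Lemma drop_null_atoms s : nonneg_atoms s -> same_mass [seq p <- s | 0 < p.2] s.
Proof.
elim: s => [|q s IH] //= /andP [q0 s0] y; case: ifP => qpos.
  by rewrite !mass_cons IH.
rewrite mass_cons; have -> : q.2 = 0 by apply/eqP; rewrite eq_le q0 andbT leNgt qpos.
by rewrite if_same add0r IH.
Qed.

(* If the distribution u' represents u with mass m <= u({x}) moved from x to a
   nonnegative t of total mass m and barycentre x, then u' is one basic split of u:
   the atom at x is split into t and what remains at x. *)
Lemma split_le_transfer u u' x m t : is_dist u -> is_dist u' ->
  0 <= m <= mass_at u x -> nonneg_atoms t ->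
  moment 0 t = m -> moment 1 t = m * x ->
  same_mass u' (u ++ (x, - m) :: t) -> split_le u u'.
Proof.
move=> du du' /andP [m0 mu] t0 M0 M1 E.
have [xu|xu] := boolP (x \in map fst u); last first.
  have m00 : m = 0 by apply/eqP; rewrite eq_le m0 andbT -(mass_at_absent xu).
  have tnull := null_of_moment0 t0 (etrans M0 m00).
  apply: split_le_same_mass => // y.
  by rewrite E mass_cat mass_cons tnull m00 oppr0 if_same mass_nil !addr0.
set i := index x (map fst u); set p := nth (0, 0) u i.
have iu : (i < size u)%N by rewrite -(size_map fst) index_mem.
have px : p.1 = x by rewrite /p -(nth_map _ 0) // nth_index.
have pm : mass_at u x = p.2 by rewrite -px dist_mass_at // mem_nth.
set t' := [seq q <- t ++ [:: (x, p.2 - m)] | 0 < q.2].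
have t'0 : nonneg_atoms (t ++ [:: (x, p.2 - m)]) by rewrite nonneg_atoms_cat t0 /= subr_ge0 -pm mu.
have Et' := drop_null_atoms t'0.
apply: rt_step; do 2 split=> //; exists i, t'; split=> //; split.
  by move=> q; rewrite mem_filter => /andP [].
rewrite -!(moment_same_mass _ (same_mass_sym Et')) !moment_cat !moment_cons !moment_nil.
rewrite /= -/p px M0 M1 expr0 expr1; split; first by ring.
split; first by ring.
move=> y; rewrite E !mass_cat /t' Et' mass_cat mass_cons mass_seq1.
rewrite -{1}(cat_take_drop i u) (drop_nth (0, 0) iu) -/p mass_cat mass_cons px.
by case: (x == y) => /=; ring.
Qed.

Lemma split_le_dist s s' : split_le s s' -> is_dist s -> is_dist s'.
Proof. by elim=> // [u u' [_ []] | u v w _ IHuv _ IHvw] // /IHuv/IHvw. Qed.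

Definition meas_le s s' := forall u u', is_dist u -> is_dist u' ->
  same_mass u s -> same_mass u' s' -> split_le u u'.

Lemma meas_le_same_mass s s' : same_mass s s' -> meas_le s s'.
Proof. by move=> E u u' du du' Eu Eu'; apply: split_le_same_mass => // y; rewrite Eu E Eu'. Qed.

Lemma meas_le_congr s1 s1' s2 s2' : same_mass s1 s1' -> same_mass s2 s2' ->
  meas_le s1 s2 -> meas_le s1' s2'.
Proof. by move=> E1 E2 H u u' du du' Eu Eu'; apply: H => // y; rewrite ?Eu ?Eu' ?E1 ?E2. Qed.

(* Transitivity through a nonnegative intermediate measure (it has a representing
   distribution, namely its normalization). *)
Lemma meas_le_trans s1 s2 s3 : nonneg_measure s2 ->
  meas_le s1 s2 -> meas_le s2 s3 -> meas_le s1 s3.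
Proof.
move=> s2pos H12 H23 u u' du du' Eu Eu'.
have dw := normalize_dist s2pos; have Ew := normalize_same_mass s2.
exact: rt_trans (H12 u _ du dw Eu Ew) (H23 _ u' dw du' Ew Eu').
Qed.

Lemma meas_le_transfer s x m t :
  0 <= m <= mass_at s x -> nonneg_atoms t ->
  moment 0 t = m -> moment 1 t = m * x -> meas_le s (s ++ (x, - m) :: t).
Proof.
move=> mx t0 M0 M1 u u' du du' Eu Eu'.
apply: (split_le_transfer du du' _ t0 M0 M1); first by rewrite Eu.
by move=> y; rewrite Eu' !mass_cat Eu.
Qed.

Lemma basic_split_transfer s s' : basic_split s s' -> exists x m t,
  [/\ 0 <= m <= mass_at s x, nonneg_atoms t, moment 0 t = m, moment 1 t = m * x
    & same_mass s' (s ++ (x, - m) :: t)].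
Proof.
case=> ds [_ [i [t [iu [t0 [M0 [M1 E]]]]]]].
set p := nth (0, 0) s i in M0 M1 E.
have Es : s = take i s ++ p :: drop i.+1 s by rewrite -drop_nth // cat_take_drop.
have ps : p \in s by apply: mem_nth.
exists p.1, p.2, t; split=> //.
- by rewrite dist_mass_at // (ltW (proj2 ds p ps)) lexx.
- by apply/allP => q /t0/ltW.
move=> y; rewrite E [in RHS]Es !mass_cat !mass_cons /=.
by case: (p.1 == y); ring.
Qed.

Section ExtremeMove.
Variables a b : R.
Hypothesis ab : a < b.

Let ba_neq0 : b - a != 0. Proof. by rewrite subr_eq0 gt_eqF. Qed.
Let ba_gt0 : 0 < b - a. Proof. by rewrite subr_gt0. Qed.

(* The extreme move on [a, b], atom by atom: an atom strictly inside (a, b) is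
   replaced by the two atoms at a and b with the same mass and barycentre. *)
Definition extreme_atom p : pmlist R :=
  if a < p.1 < b then
    [:: (a, p.2 * (b - p.1) / (b - a)); (b, p.2 * (p.1 - a) / (b - a))]
  else [:: p].

Definition extreme s : pmlist R := flatten (map extreme_atom s).

Lemma extreme_cat s t : extreme (s ++ t) = extreme s ++ extreme t.
Proof. by rewrite /extreme map_cat flatten_cat. Qed.

Lemma extreme_cons p s : extreme (p :: s) = extreme_atom p ++ extreme s.
Proof. by []. Qed.

Lemma extreme_atom_moment j p : (j <= 1)%N ->
  moment j (extreme_atom p) = p.2 * p.1 ^+ j.
Proof.
rewrite /extreme_atom; case: ifP => _ j1; last by rewrite moment_cons moment_nil addr0.
rewrite !moment_cons moment_nil /=.
by case: j j1 => [|[|//]] _; rewrite ?expr0 ?expr1; field.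
Qed.

Lemma extreme_moment j s : (j <= 1)%N -> moment j (extreme s) = moment j s.
Proof.
move=> j1; elim: s => [|p s IH] //.
by rewrite extreme_cons moment_cat moment_cons IH extreme_atom_moment.
Qed.

Lemma extreme_atom_nonneg p : 0 <= p.2 -> nonneg_atoms (extreme_atom p).
Proof.
rewrite /extreme_atom /nonneg_atoms => p0; case: ifP => [/andP [ap pb]|_] /=.
  by rewrite andbT; apply/andP; split; apply: divr_ge0;
    rewrite ?(ltW ba_gt0) // mulr_ge0 // subr_ge0 ltW.
by rewrite p0.
Qed.

Lemma extreme_nonneg s : nonneg_atoms s -> nonneg_atoms (extreme s).
Proof.
elim: s => [|p s IH] //= /andP [p0 s0].
by rewrite nonneg_atoms_cat extreme_atom_nonneg ?IH.
Qed.

Lemma extreme_no_inner_atom s : all (fun q => ~~ (a < q.1 < b)) (extreme s).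
Proof.
elim: s => [|p s IH] //=; rewrite all_cat IH andbT /extreme_atom.
by case: ifP => [_|pab] /=; rewrite ?pab ?ltxx ?andbF.
Qed.

Lemma extreme_mass_inner s y : a < y < b -> mass_at (extreme s) y = 0.
Proof.
move=> yab; apply: mass_at_absent; apply/mapP => -[q qs yq].
by move/allP: (extreme_no_inner_atom s) => /(_ q qs); rewrite -yq yab.
Qed.

Lemma extreme_mass_outer s y : ~~ (a <= y <= b) -> mass_at (extreme s) y = mass_at s y.
Proof.
move=> yab; elim: s => [|p s IH] //.
rewrite extreme_cons mass_cat mass_cons IH -mass_seq1; congr (_ + _).
rewrite /extreme_atom; case: ifP => // /andP [ap pb].
have ne z : a <= z <= b -> (z == y) = false.
  by move=> zab; apply: contraNF yab => /eqP <-.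
rewrite [LHS]mass_cons !mass_seq1 /= !ne ?lexx ?(ltW ab) ?(ltW ap) ?(ltW pb) //.
by rewrite addr0.
Qed.

Lemma extreme_mass_ge s y : nonneg_atoms s -> ~~ (a < y < b) ->
  mass_at s y <= mass_at (extreme s) y.
Proof.
move=> + yab; elim: s => [|p s IH] //= /andP [p0 s0].
rewrite extreme_cons mass_cat mass_cons -mass_seq1 lerD ?IH //.
rewrite /extreme_atom; case: ifP => // pab.
rewrite mass_seq1; case: eqP => [py|_]; first by rewrite -py pab in yab.
by apply: mass_at_ge0; have := extreme_atom_nonneg p0; rewrite /extreme_atom pab.
Qed.

Lemma extreme_mass_left s x : nonneg_atoms s -> a < x < b ->
  mass_at s x * (b - x) / (b - a) <= mass_at (extreme s) a.
Proof.
move=> + xab; elim: s => [|p s IH] /=; first by rewrite !mass_nil !mul0r.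
case/andP=> p0 s0; rewrite extreme_cons mass_cat mass_cons !mulrDl lerD ?IH //.
case: eqP => [px|_]; last by rewrite !mul0r mass_at_ge0 ?extreme_atom_nonneg.
by rewrite /extreme_atom px xab mass_cons mass_seq1 /= eqxx gt_eqF // addr0.
Qed.

Lemma extreme_mass_right s x : nonneg_atoms s -> a < x < b ->
  mass_at s x * (x - a) / (b - a) <= mass_at (extreme s) b.
Proof.
move=> + xab; elim: s => [|p s IH] /=; first by rewrite !mass_nil !mul0r.
case/andP=> p0 s0; rewrite extreme_cons mass_cat mass_cons !mulrDl lerD ?IH //.
case: eqP => [px|_]; last by rewrite !mul0r mass_at_ge0 ?extreme_atom_nonneg.
by rewrite /extreme_atom px xab mass_cons mass_seq1 /= eqxx lt_eqF // add0r.
Qed.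

(* Two measures agreeing off {a, b} with the same total mass and first moment
   coincide: the masses at a and b are the solution of a regular 2x2 system. *)
Lemma same_mass_of_moments s t :
  (forall y, y != a -> y != b -> mass_at s y = mass_at t y) ->
  moment 0 s = moment 0 t -> moment 1 s = moment 1 t -> same_mass s t.
Proof.
move=> Eoff M0 M1.
have uZ : uniq [:: a; b] by rewrite /= inE lt_eqF.
have EZ y : y \notin [:: a; b] -> mass_at s y = mass_at t y.
  by rewrite !inE negb_or => /andP []; apply: Eoff.
have := moment_diff_on 0 uZ EZ; have := moment_diff_on 1 uZ EZ.
rewrite M0 M1 !subrr !big_cons !big_nil !addr0 !expr0 !expr1 !mulr1.
set P := mass_at s a - _; set Q := mass_at s b - _ => D1 D0.
have : Q * (b - a) = (P * a + Q * b) - a * (P + Q) by ring.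
rewrite -D0 -D1 mulr0 subr0 => /eqP; rewrite mulf_eq0 (negbTE ba_neq0) orbF.
move=> /eqP Q0.
have P0 : P = 0 by apply: (addIr Q); rewrite -D0 Q0 add0r.
move=> y; have [->|ya] := eqVneq y a; first by apply/eqP; rewrite -subr_eq0 -/P P0.
have [->|yb] := eqVneq y b; first by apply/eqP; rewrite -subr_eq0 -/Q Q0.
exact: Eoff.
Qed.

Lemma extreme_unique h f :
  (forall y, a < y < b -> mass_at h y = 0) ->
  (forall y, ~~ (a <= y <= b) -> mass_at h y = mass_at f y) ->
  moment 0 h = moment 0 f -> moment 1 h = moment 1 f -> same_mass h (extreme f).
Proof.
move=> Hin Hout M0 M1; apply: same_mass_of_moments; rewrite ?extreme_moment //.
move=> y ya yb; have [yab|yab] := boolP (a <= y <= b).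
  have yin : a < y < b.
    by case/andP: yab => ay yb'; rewrite !lt_def ya ay eq_sym yb yb'.
  by rewrite Hin // extreme_mass_inner.
by rewrite Hout // extreme_mass_outer.
Qed.

Lemma extreme_same_mass s t : same_mass s t -> same_mass (extreme s) (extreme t).
Proof.
move=> E; apply: extreme_unique => [y|y yab||].
- exact: extreme_mass_inner.
- by rewrite extreme_mass_outer.
all: by rewrite extreme_moment // (moment_same_mass _ E).
Qed.

(* Every nonnegative list is below its extreme image: each atom p is split into
   extreme_atom p. The extra summand c makes the induction go through. *)
Lemma le_extreme_cat s c : nonneg_atoms s -> nonneg_atoms c ->
  meas_le (s ++ c) (extreme s ++ c).
Proof.
elim: s c => [|p s IH] c; first by move=> _ _; apply: meas_le_same_mass.
rewrite nonneg_atoms_cons => /andP [p0 s0] c0.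
have c'0 : nonneg_atoms (c ++ extreme_atom p) by rewrite nonneg_atoms_cat c0 extreme_atom_nonneg.
have split_p : meas_le ((p :: s) ++ c) (s ++ (c ++ extreme_atom p)).
  apply: (meas_le_congr _ _ (@meas_le_transfer _ p.1 p.2 (extreme_atom p) _ _ _ _)) => //.
  - by move=> y; rewrite !mass_cat !mass_cons /=; case: (p.1 == y); ring.
  - by rewrite p0 /= mass_cons eqxx lerDl mass_at_ge0 // nonneg_atoms_cat s0.
  - exact: extreme_atom_nonneg.
  - by rewrite extreme_atom_moment // expr0 mulr1.
  - by rewrite extreme_atom_moment // expr1.
apply: (meas_le_trans _ split_p); first by move=> y; rewrite mass_at_ge0 // nonneg_atoms_cat s0.
apply: (meas_le_congr _ _ (IH _ s0 c'0)) => // y.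
by rewrite extreme_cons !mass_cat; ring.
Qed.

Lemma le_extreme s : nonneg_atoms s -> meas_le s (extreme s).
Proof. by move=> s0; have := le_extreme_cat s0 (isT : nonneg_atoms [::]); rewrite !cats0. Qed.

(* Let L (atoms <= a) and R' (atoms >= b) have masses SL, SR and
   first moments TL, TR, with joint barycentre in [a, b]. Then suitable fractions
   lam of L and mu of R' form a measure of barycentre a carrying exactly the mass
   w that the extreme move assigns to a. *)
Lemma mixing_weights SL SR TL TR : 0 <= SL -> 0 <= SR ->
  TL <= a * SL -> b * SR <= TR -> a * (SL + SR) <= TL + TR <= b * (SL + SR) ->
  (SL = 0 -> TL = 0) -> (SR = 0 -> TR = 0) ->
  let w := (b * (SL + SR) - (TL + TR)) / (b - a) in
  exists lam mu, [/\ 0 <= lam <= 1, 0 <= mu <= 1,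
    lam * SL + mu * SR = w & lam * TL + mu * TR = w * a].
Proof.
move=> SL0 SR0 TLa TRb /andP [lo hi] TLnull TRnull w.
have [SLz|SLpos] := eqVneq SL 0.
  have TRb' : TR = b * SR.
    apply/eqP; rewrite eq_le TRb andbT; move: hi; by rewrite SLz TLnull // !add0r.
  exists 0, 0; rewrite lexx ler01; split=> //; rewrite /w SLz TLnull // TRb'; ring.
have [SRz|SRpos] := eqVneq SR 0.
  have TLa' : TL = a * SL.
    apply/eqP; rewrite eq_le TLa /=; move: lo; by rewrite SRz TRnull // !addr0.
  exists 1, 1; rewrite lexx ler01; split=> //; rewrite /w SRz TRnull // TLa'.
    by field.
  by field.
pose D := SL * TR - SR * TL.
have Dpos : 0 < D.
  have -> : D = SL * (TR - b * SR) + SR * (a * SL - TL) + (b - a) * SL * SR by rewrite /D; ring.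
  by rewrite ltr_wpDl ?addr_ge0 ?mulr_ge0 ?subr_ge0 // !mulr_gt0 // lt_def ?SLpos ?SRpos.
have bD : 0 < (b - a) * D by rewrite mulr_gt0.
have num0 : 0 <= b * (SL + SR) - (TL + TR) by rewrite subr_ge0.
have lo' : 0 <= TL + TR - a * (SL + SR) by rewrite subr_ge0.
exists ((b * (SL + SR) - (TL + TR)) * (TR - a * SR) / ((b - a) * D)).
exists ((b * (SL + SR) - (TL + TR)) * (a * SL - TL) / ((b - a) * D)).
split.
- apply/andP; split.
    apply: divr_ge0; rewrite ?(ltW bD) // mulr_ge0 // subr_ge0.
    by apply: le_trans TRb; rewrite ler_wpM2r // ltW.
  rewrite ler_pdivrMr // mul1r -subr_ge0.
  have -> : (b - a) * D - (b * (SL + SR) - (TL + TR)) * (TR - a * SR) =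
    (TR - b * SR) * (TL + TR - a * (SL + SR)) by rewrite /D; ring.
  by rewrite mulr_ge0 // subr_ge0.
- apply/andP; split.
    by apply: divr_ge0; rewrite ?(ltW bD) // mulr_ge0 // subr_ge0.
  rewrite ler_pdivrMr // mul1r -subr_ge0.
  have -> : (b - a) * D - (b * (SL + SR) - (TL + TR)) * (a * SL - TL) =
    (b * SL - TL) * (TL + TR - a * (SL + SR)) by rewrite /D; ring.
  by rewrite mulr_ge0 // subr_ge0 (le_trans TLa) // ler_wpM2r // ltW.
- by rewrite /w /D; field; rewrite ba_neq0 -/D gt_eqF.
- by rewrite /w /D; field; rewrite ba_neq0 -/D gt_eqF.
Qed.

Lemma barycentric_split E x m : nonneg_atoms E -> all (fun q => ~~ (a < q.1 < b)) E ->
  moment 0 E = m -> moment 1 E = m * x -> a <= x <= b ->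
  let wa := m * (b - x) / (b - a) in let wb := m * (x - a) / (b - a) in
  exists A B, [/\ nonneg_atoms A, nonneg_atoms B, same_mass (A ++ B) E,
    moment 0 A = wa /\ moment 1 A = wa * a & moment 0 B = wb /\ moment 1 B = wb * b].
Proof.
move=> E0 Eout M0 M1 /andP [ax xb] wa wb.
pose L := [seq q <- E | q.1 <= a]; pose R' := [seq q <- E | ~~ (q.1 <= a)].
have L0 : nonneg_atoms L := nonneg_atoms_filter _ E0.
have R'0 : nonneg_atoms R' := nonneg_atoms_filter _ E0.
have ELR : same_mass (L ++ R') E by apply: same_mass_perm; rewrite perm_filterC.
have HS : moment 0 L + moment 0 R' = m by rewrite -M0 -moment_cat (moment_same_mass _ ELR).
have HT : moment 1 L + moment 1 R' = m * x.
  by rewrite -M1 -moment_cat (moment_same_mass _ ELR).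
have TLa : moment 1 L <= a * moment 0 L by apply: moment1_le => //; apply: filter_all.
have TRb : b * moment 0 R' <= moment 1 R'.
  apply: moment1_ge => //; apply/allP => q; rewrite mem_filter -ltNge => /andP [aq qE].
  by move/allP: Eout => /(_ q qE); rewrite aq /= -leNgt.
have null1 s : nonneg_atoms s -> moment 0 s = 0 -> moment 1 s = 0.
  by move=> s0 /(null_of_moment0 s0)/(moment_same_mass 1) ->; rewrite moment_nil.
have m0 : 0 <= m by rewrite -M0 moment0_ge0.
have mid : a * (moment 0 L + moment 0 R') <= moment 1 L + moment 1 R'
    <= b * (moment 0 L + moment 0 R').
  by rewrite HS HT [a * m]mulrC [b * m]mulrC !ler_wpM2l.
have wE : (b * (moment 0 L + moment 0 R') - (moment 1 L + moment 1 R')) / (b - a) = wa.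
  by rewrite HS HT /wa; congr (_ / _); ring.
have [lam [mu]] := mixing_weights (moment0_ge0 L0) (moment0_ge0 R'0) TLa TRb mid
  (null1 _ L0) (null1 _ R'0).
rewrite /= wE => -[lam01 mu01 EA0 EA1].
case/andP: lam01 => lam0 lam1; case/andP: mu01 => mu0 mu1.
exists (scale lam L ++ scale mu R'), (scale (1 - lam) L ++ scale (1 - mu) R'); split.
- by rewrite nonneg_atoms_cat !scale_nonneg.
- by rewrite nonneg_atoms_cat !scale_nonneg ?subr_ge0.
- by move=> y; rewrite -ELR !mass_cat !scale_mass; ring.
- by rewrite !moment_cat !scale_moment.
rewrite !moment_cat !scale_moment; split.
  have -> : (1 - lam) * moment 0 L + (1 - mu) * moment 0 R' =
    (moment 0 L + moment 0 R') - (lam * moment 0 L + mu * moment 0 R') by ring.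
  by rewrite EA0 HS /wa /wb; field.
have -> : (1 - lam) * moment 1 L + (1 - mu) * moment 1 R' =
  (moment 1 L + moment 1 R') - (lam * moment 1 L + mu * moment 1 R') by ring.
by rewrite EA1 HT /wa /wb; field.
Qed.

(* Extreme image of a transfer from an inner point x: the masses wa, wb that the
   extreme move sends from x to a and b are split back into A and B. *)
Lemma extreme_transfer_inner s x m A B : nonneg_atoms s -> 0 <= m <= mass_at s x ->
  a < x < b -> nonneg_atoms A -> nonneg_atoms B ->
  let wa := m * (b - x) / (b - a) in let wb := m * (x - a) / (b - a) in
  moment 0 A = wa -> moment 1 A = wa * a -> moment 0 B = wb -> moment 1 B = wb * b ->
  meas_le (extreme s) ((extreme s ++ (a, - wa) :: A) ++ (b, - wb) :: B).
Proof.
move=> s0 /andP [m0 mx] xab A0 B0 wa wb MA0 MA1 MB0 MB1.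
have /andP [ax xb] := xab.
have es0 := extreme_nonneg s0.
have w0 (y : R) : 0 <= y -> 0 <= m * y / (b - a).
  by move=> y0; rewrite divr_ge0 ?mulr_ge0 ?(ltW ba_gt0).
have wle (y : R) : 0 <= y -> m * y / (b - a) <= mass_at s x * y / (b - a).
  by move=> y0; rewrite ler_wpM2r ?invr_ge0 ?(ltW ba_gt0) // ler_wpM2r.
have wa_le : wa <= mass_at (extreme s) a.
  by apply: le_trans (extreme_mass_left s0 xab); rewrite wle // subr_ge0 ltW.
have wb_le : wb <= mass_at (extreme s) b.
  by apply: le_trans (extreme_mass_right s0 xab); rewrite wle // subr_ge0 ltW.
have u1pos : nonneg_measure (extreme s ++ (a, - wa) :: A).
  move=> y; rewrite mass_cat mass_cons addrA /=.
  rewrite addr_ge0 ?mass_at_ge0 //; case: eqP => [<-|_]; first by rewrite subr_ge0.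
  by rewrite addr0 mass_at_ge0.
apply: (meas_le_trans u1pos); apply: meas_le_transfer => //.
- by rewrite wa_le andbT /wa w0 // subr_ge0 ltW.
- rewrite mass_cat mass_cons /= lt_eqF // add0r (le_trans wb_le) ?lerDl ?mass_at_ge0 //.
  by rewrite /wb w0 // subr_ge0 ltW.
Qed.

Lemma extreme_transfer s x m t : nonneg_atoms s -> 0 <= m <= mass_at s x ->
  nonneg_atoms t -> moment 0 t = m -> moment 1 t = m * x ->
  meas_le (extreme s) (extreme (s ++ (x, - m) :: t)).
Proof.
move=> s0 mx t0 M0 M1; have es0 := extreme_nonneg s0.
have [et0 eM0 eM1] : [/\ nonneg_atoms (extreme t), moment 0 (extreme t) = m
  & moment 1 (extreme t) = m * x] by rewrite extreme_nonneg ?extreme_moment.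
rewrite extreme_cat extreme_cons /extreme_atom /=.
case: ifP => xab; last first.
  apply: meas_le_transfer => //.
  have xout : ~~ (a < x < b) by rewrite xab.
  by case/andP: mx => m0 mx; rewrite m0 (le_trans mx (extreme_mass_ge s0 xout)).
have [A [B [A0 B0 EAB [MA0 MA1] [MB0 MB1]]]] :=
  barycentric_split et0 (extreme_no_inner_atom t) eM0 eM1
    (let: conj ax xb := andP xab in introT andP (conj (ltW ax) (ltW xb))).
apply: (meas_le_congr _ _ (extreme_transfer_inner s0 mx xab A0 B0 MA0 MA1 MB0 MB1)) => //.
move=> y; rewrite !mass_cat !mass_cons mass_nil -EAB mass_cat !mulNr /=.
by case: (a == y); case: (b == y); ring.
Qed.

Lemma extreme_mono s s' : split_le s s' -> is_dist s ->
  meas_le (extreme s) (extreme s').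
Proof.
elim=> [u u' uu'|u|u v w uv IHuv vw IHvw] du.
- have [x [m [t [mx t0 M0 M1 E]]]] := basic_split_transfer uu'.
  apply: (meas_le_congr _ (extreme_same_mass (same_mass_sym E))) => //.
  exact: extreme_transfer (dist_nonneg du) mx t0 M0 M1.
- exact: meas_le_same_mass.
- have dv := split_le_dist uv du.
  apply: meas_le_trans (IHuv du) (IHvw dv) => y.
  by apply: mass_at_ge0; apply: extreme_nonneg; apply: dist_nonneg.
Qed.

Lemma move_le_extreme (mu mu' d nu nu' : pmlist R) : is_dist mu -> split_le mu mu' ->
  is_move a b d -> move_result d mu nu -> extreme_result a b mu' nu' ->
  split_le nu nu'.
Proof.
move=> dmu mumu' [[_ dab] [Md0 Md1]] [dnu Enu] [dnu' [Iin [Iout [I0 I1]]]].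
have dout y : ~~ (a <= y <= b) -> mass_at d y = 0.
  by move=> yab; apply: mass_at_absent; apply/mapP => -[q /dab [_ qab] yq]; rewrite yq qab in yab.
have Mnu j : moment j nu = moment j mu + moment j d.
  by rewrite -moment_cat; apply: moment_same_mass => y; rewrite Enu mass_cat.
have E1 : same_mass (extreme nu) (extreme mu).
  apply: extreme_unique => [y|y yab||]; rewrite ?extreme_moment ?Mnu ?Md0 ?Md1 ?addr0 //.
  - exact: extreme_mass_inner.
  - by rewrite extreme_mass_outer // Enu dout // addr0.
have E2 : same_mass nu' (extreme mu').
  by apply: extreme_unique => // y /negP; apply: Iout.
have nu_le : meas_le nu nu'.
  apply: (meas_le_trans _ (le_extreme (dist_nonneg dnu))).
    by move=> y; apply: mass_at_ge0; apply: extreme_nonneg; apply: dist_nonneg.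
  exact: meas_le_congr (same_mass_sym E1) (same_mass_sym E2) (extreme_mono mumu' dmu).
by apply: nu_le.
Qed.

End ExtremeMove.

Lemma same_mass_off_point (a : R) s t : (forall y, y != a -> mass_at s y = mass_at t y) ->
  moment 0 s = moment 0 t -> same_mass s t.
Proof.
move=> Eoff M0 y; have [->|] := eqVneq y a; last exact: Eoff.
have EZ z : z \notin [:: a] -> mass_at s z = mass_at t z by rewrite inE; apply: Eoff.
have := moment_diff_on 0 (isT : uniq [:: a]) EZ.
by rewrite M0 subrr big_seq1 expr0 mulr1 => /eqP; rewrite eq_sym subr_eq0 => /eqP.
Qed.

(* Theorem 10 for a degenerate interval: the move is trivial and so is the extreme move. *)
Lemma move_le_point (a : R) (mu mu' d nu nu' : pmlist R) : is_dist mu -> split_le mu mu' ->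
  is_move a a d -> move_result d mu nu -> extreme_result a a mu' nu' ->
  split_le nu nu'.
Proof.
move=> dmu mumu' [[_ da] [Md0 _]] [dnu Enu] [dnu' [_ [Iout [I0 _]]]].
have ya y : y != a -> ~ (a <= y <= a) by move=> ya /le_anti ay; rewrite ay eqxx in ya.
have d0 : same_mass d [::].
  apply: (same_mass_off_point (a := a)); last by rewrite Md0 moment_nil.
  move=> y /ya yaa; rewrite mass_nil; apply: mass_at_absent.
  by apply/mapP => -[q /da [_ qa] yq]; rewrite yq in yaa.
have E1 : same_mass nu mu by move=> y; rewrite Enu d0 mass_nil addr0.
have E2 : same_mass nu' mu' by apply: (same_mass_off_point (a := a)) => // y /ya; apply: Iout.
have dmu' := split_le_dist mumu' dmu.
apply: rt_trans (split_le_same_mass dnu dmu E1) _; apply: rt_trans mumu' _.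
exact: split_le_same_mass dmu' dnu' (same_mass_sym E2).
Qed.

End PointMasses.

Theorem mainTheorem10 (R : realFieldType) (mu mu' : pmlist R) (a b : R)
    (d nu nu' : pmlist R) :
  is_dist mu -> split_le mu mu' ->
  a <= b -> is_move a b d ->
  move_result d mu nu ->
  extreme_result a b mu' nu' ->
  split_le nu nu'.
Proof.
move=> dmu mumu'; rewrite le_eqVlt => /orP [/eqP <-|ab].
  exact: move_le_point.
exact: move_le_extreme.
Qed.
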